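(* Let $\pi$ be a block-constructed permutation. Then $\pi$ is transposition Lagrangian.
   Context: Work on $\mathcal{A}=\{1,\dots,d\}$ with $\pi_0=\mathrm{id}$, so $\pi=(\mathrm{id},\pi_1)$ is identified with $\pi_1\in\mathfrak{S}_d$ (position of letter $k$ in the bottom row is $\pi_1(k)$). A permutation is block-constructed if $\pi_1(1)=d$, $\pi_1(d)=1$ (standard), and $\{2,\dots,d-1\}$ is partitioned into consecutive intervals $\{j,\dots,j+n-1\}$ with $n\in\{1,2,3,4,5\}$ on each of which $\pi_1$ reverses the order: $\pi_1(k)=2j+n-1-k$ for $j\le k\le j+n-1$. (These are exactly the standard permutations whose interior is a concatenation of the blocks $\begin{pmatrix}\alpha\\\alpha\end{pmatrix}$, $\begin{pmatrix}\alpha_1\alpha_2\dots\alpha_n\\\alpha_n\dots\alpha_1\end{pmatrix}$ for $n=2,\dots,5$; in particular they are self-inverse.) Define $\Omega=\Omega_\pi$ by $\Omega_{\alpha,\beta}=1$ if $\pi_0(\alpha)<\pi_0(\beta)$ and $\pi_1(\alpha)>\pi_1(\beta)$, $-1$ if $\pi_0(\alpha)>\pi_0(\beta)$ and $\pi_1(\alpha)<\pi_1(\beta)$, $0$ otherwise; $g(\pi)=\tfrac12\mathrm{rank}\,\Omega_\pi$ (the genus). Let $\pi_{\mathcal{A}}=\pi_0^{-1}\circ\pi_1$, $\mathbf{e}_{\mathcal{B}}=\sum_{\alpha\in\mathcal{B}}\mathbf{e}_\alpha$, $\mathbf{v}_{\mathcal{B}}=\Omega\mathbf{e}_{\mathcal{B}}$.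 A self-inverse $\pi$ is transposition Lagrangian if $\dim\mathrm{span}\{\mathbf{v}_{\mathcal{B}}:\mathcal{B}\text{ an orbit of }\pi_{\mathcal{A}},\#\mathcal{B}=2\}=\#\{\text{such orbits}\}=g(\pi)$. *)

From mathcomp Require Import all_boot all_order all_algebra all_fingroup.
Set Implicit Arguments. Unset Strict Implicit. Unset Printing Implicit Defensive.
Import GRing.Theory Num.Theory.
Local Open Scope ring_scope.

(* Alphabet {1,...,d} is modelled by 'I_d = {0,...,d-1} (letter k <-> ordinal k-1).
   pi_0 = id, so pi is identified with pi_1 : {perm 'I_d}; pi i is the (0-based)
   position of letter i in the bottom row. *)

Fixpoint blocks_ok (d : nat) (pi : {perm 'I_d}) (j : nat) (ns : seq nat) : Prop :=
  match ns with
  | [::] => True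
  | n :: ns' =>
      (0 < n <= 5)%N /\
      (forall i : 'I_d, (j <= i < j + n)%N -> val (pi i) = (j + j + n).-1 - i)%N /\
      blocks_ok pi (j + n) ns'
  end.

Definition block_constructed (d : nat) (pi : {perm 'I_d}) : Prop :=
  (forall i : 'I_d, val i = 0%N -> val (pi i) = d.-1) /\
  (forall i : 'I_d, val i = d.-1 -> val (pi i) = 0%N) /\
  exists ns : seq nat, sumn ns = (d - 2)%N /\ blocks_ok pi 1 ns.

Definition Omega (d : nat) (pi : {perm 'I_d}) : 'M[rat]_d :=
  \matrix_(a, b)
    (if ((a < b)%N && (pi b < pi a)%N) then 1
     else if ((b < a)%N && (pi a < pi b)%N) then -1 else 0).

Definition genus (d : nat) (pi : {perm 'I_d}) : nat := (\rank (Omega pi))./2.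

(* pi_A = pi_0^{-1} o pi_1 = pi_1 since pi_0 = id *)
Definition piA (d : nat) (pi : {perm 'I_d}) : {perm 'I_d} := pi.

Definition orbits2 (d : nat) (pi : {perm 'I_d}) : {set {set 'I_d}} :=
  [set B in porbits (piA pi) | #|B| == 2%N].

Definition e_vec (d : nat) (B : {set 'I_d}) : 'cV[rat]_d :=
  \col_a (if a \in B then 1 else 0).

Definition v_vec (d : nat) (pi : {perm 'I_d}) (B : {set 'I_d}) : 'cV[rat]_d :=
  Omega pi *m e_vec B.

Definition span_dim (d : nat) (pi : {perm 'I_d}) : nat :=
  \rank (\sum_(B in orbits2 pi) <<(v_vec pi B)^T>>)%MS.

Definition self_inverse (d : nat) (pi : {perm 'I_d}) : Prop := (pi * pi = 1)%g.

Definition transposition_Lagrangian (d : nat) (pi : {perm 'I_d}) : Prop :=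
  self_inverse pi /\
  span_dim pi = #|orbits2 pi| /\ #|orbits2 pi| = genus pi.

From mathcomp Require Import all_boot all_order all_algebra all_fingroup.
From mathcomp Require Import zify lra.
Set Implicit Arguments. Unset Strict Implicit. Unset Printing Implicit Defensive.
Import GRing.Theory Num.Theory.
Local Open Scope ring_scope.

(* A block-constructed permutation is an involution whose 2-cycles do not
   cross: 0 and d-1 are swapped, and each reversed block pairs its letters
   symmetrically around its centre.  Ordering the 2-cycles by their smaller
   letter makes the vectors v_B triangular, hence independent.  For the genus,
   subtracting the first and last rows of Omega from the row of a letter in a
   block leaves the sign matrix of that block, supported on the block; these
   small sign matrices are inverted explicitly (blocks have length at most 5),
   which shows that rank Omega is the number of moved letters, i.e. twice the
   number of 2-cycles. *)

Section RowRank.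
Variable F : fieldType.

Lemma mxrank_sum_rows_le (I : finType) (P : {pred I}) n (v : I -> 'rV[F]_n) :
  (\rank (\sum_(i in P) <<v i>>)%MS <= #|P|)%N.
Proof.
rewrite -sum1_card; elim/big_rec2: _ => [|i k M _ IH]; first by rewrite mxrank0.
apply: leq_trans (mxrank_adds_leqif _ _) _.
by rewrite leq_add // mxrank_gen rank_leq_row.
Qed.

Lemma mxrank_sum_rows_triangular n (S : {set 'I_n}) (w : 'I_n -> 'rV[F]_n)
    (h : 'I_n -> nat) :
  (forall s, s \in S -> w s 0 s != 0) ->
  (forall s t, s \in S -> t \in S -> s != t -> (h s <= h t)%N -> w s 0 t = 0) ->
  (#|S| <= \rank (\sum_(s in S) <<w s>>)%MS)%N.
Proof.
move=> pivot triangular; have [b] := ubnP #|S|.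
elim: b S pivot triangular => // b IH S pivot triangular ltSb.
have [->|[x xS]] := set_0Vmem S; first by rewrite cards0.
pose s0 := [arg max_(i > x in S) h i].
have [s0S s0max] : s0 \in S /\ forall t, t \in S -> (h t <= h s0)%N.
  by rewrite /s0; case: arg_maxnP.
have subS : S :\ s0 \subset S := subD1set S s0.
have cardS : #|S| = #|S :\ s0|.+1 by rewrite (cardsD1 s0 S) s0S.
have rank_rest : (#|S :\ s0| <= \rank (\sum_(s in S :\ s0) <<w s>>)%MS)%N.
  apply: IH => [s /(subsetP subS)|s t /(subsetP subS) sS /(subsetP subS)|].
  - exact: pivot.
  - exact: triangular.
  - by rewrite -ltnS -cardS.
rewrite (bigD1 s0) //= cardS.
rewrite (eq_bigl (mem (S :\ s0))) => [|i]; last by rewrite !inE andbC.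
apply: leq_ltn_trans rank_rest _; apply: rank_ltmx.
rewrite ltmxE addsmxSr /=; apply/negP => sub.
pose e := delta_mx s0 (0 : 'I_1) : 'cV[F]_n.
have coord_s0 (u : 'rV[F]_n) : (u *m e) 0 0 = u 0 s0.
  rewrite !mxE (bigD1 s0) //= big1 => [|k /negbTE nk]; last by rewrite !mxE nk mulr0.
  by rewrite !mxE !eqxx mulr1 addr0.
have rest_ker : ((\sum_(s in S :\ s0) <<w s>>)%MS <= kermx e)%MS.
  apply/sumsmx_subP => t; rewrite !inE => /andP[ts0 tS].
  rewrite genmxE; apply/sub_kermxP/rowP => z; rewrite ord1 coord_s0 mxE.
  by apply: triangular => //; apply: s0max.
have : (w s0 <= kermx e)%MS.
  apply: submx_trans rest_ker; apply: submx_trans sub.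
  by apply: submx_trans (addsmxSl _ _); rewrite genmxE.
move/sub_kermxP/rowP/(_ 0); rewrite coord_s0 mxE => /eqP.
by rewrite (negbTE (pivot s0 s0S)).
Qed.

End RowRank.

Lemma OmegaE d (pi : {perm 'I_d}) a b : Omega pi a b =
  if (a < b)%N && (pi b < pi a)%N then 1
  else if (b < a)%N && (pi a < pi b)%N then -1 else 0.
Proof. by rewrite mxE. Qed.

Section Involution.
Variables (d : nat) (pi : {perm 'I_d}).
Hypothesis piK : involutive pi.

Definition moved := [set x : 'I_d | pi x != x].
Definition openers := [set x : 'I_d | (x < pi x)%N].

Lemma expg_involutive i x : (pi ^+ i)%g x = if odd i then pi x else x.
Proof.
elim: i x => [|i IH] x; first by rewrite expg0 perm1.
by rewrite expgS permM IH /=; case: (odd i); rewrite ?piK.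
Qed.

Lemma porbit_involutive x : porbit pi x = [set x; pi x].
Proof.
apply/setP => y; rewrite !inE; apply/porbitP/orP => [[i ->]|[/eqP->|/eqP->]].
- by rewrite expg_involutive; case: (odd i); [right|left].
- by exists 0%N; rewrite expg0 perm1.
- by exists 1%N; rewrite expg1.
Qed.

Lemma orbits2_openers : orbits2 pi = (fun s => [set s; pi s]) @: openers.
Proof.
apply/setP => B; rewrite /orbits2 /piA inE; apply/andP/imsetP.
- move=> [/imsetP[x _ ->]]; rewrite porbit_involutive cards2 eqSS eqb1 => nx.
  case: (ltngtP x (pi x)) => [lt|gt|eq].
  + by exists x; rewrite // inE.
  + by exists (pi x); rewrite ?inE piK // setUC.
  + by move/eqP: nx; case; apply: val_inj.
- move=> [s]; rewrite inE => lt -> /=.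
  split; first by rewrite -porbit_involutive; apply: imset_f.
  have ne : s != pi s by apply: contraTneq lt => <-; rewrite ltnn.
  by rewrite cards2 ne.
Qed.

Lemma card_orbits2 : #|orbits2 pi| = #|openers|.
Proof.
rewrite orbits2_openers; apply: card_in_imset => s t; rewrite !inE => lts ltt eq.
have : s \in [set t; pi t] by rewrite -eq !inE eqxx.
rewrite !inE => /orP[/eqP //|/eqP est].
by move: lts; rewrite est piK; lia.
Qed.

Lemma card_moved : #|moved| = (#|openers|).*2.
Proof.
have -> : moved = openers :|: pi @: openers.
  apply/setP => x; rewrite !inE -(inj_eq val_inj) /=.
  have -> : (x \in pi @: openers) = (pi x < x)%N.
    apply/imsetP/idP => [[y]|gt]; first by rewrite inE => lt ->; rewrite piK.
    by exists (pi x); rewrite ?piK // inE piK.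
  by case: ltngtP.
rewrite cardsU card_imset; last exact: perm_inj.
have -> : openers :&: pi @: openers = set0.
  apply/setP => x; rewrite !inE; apply/negP => /andP[lt /imsetP[y]].
  by rewrite inE => lty ex; move: lt; rewrite ex piK; lia.
by rewrite cards0 subn0 addnn.
Qed.

Hypothesis pi_noncrossing : forall s t : 'I_d,
  (s < pi s)%N -> (s < t < pi s)%N -> (t < pi t)%N -> (pi t < pi s)%N.

Lemma v_vec_pairE (s t : 'I_d) : pi s != s ->
  (v_vec pi [set s; pi s])^T 0 t = Omega pi t s + Omega pi t (pi s).
Proof.
move=> ns; rewrite !mxE (bigD1 s) // (bigD1 (pi s)) /=; last by rewrite ns.
rewrite big1 => [|b /andP[nbs nbps]]; last by rewrite !mxE !inE (negbTE nbs) (negbTE nbps) mulr0.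
by rewrite !mxE !inE !eqxx orbT !mulr1 addr0.
Qed.

Lemma span_dim_noncrossing : span_dim pi = #|orbits2 pi|.
Proof.
apply/eqP; rewrite eqn_leq mxrank_sum_rows_le card_orbits2.
have moved_opener s : s \in openers -> pi s != s.
  by rewrite inE -val_eqE => lt; rewrite gtn_eqF.
apply: leq_trans (@mxrank_sum_rows_triangular _ _ openers
  (fun s => (v_vec pi [set s; pi s])^T) (@nat_of_ord d) _ _) _.
- move=> s os; rewrite v_vec_pairE ?moved_opener // !OmegaE piK.
  by move: os; rewrite inE => lt; rewrite ltnn lt.
- move=> s t; rewrite !inE => lts ltt nst le_st.
  rewrite v_vec_pairE ?moved_opener ?inE // !OmegaE piK.
  have nst' : nat_of_ord s != t by rewrite val_eqE.
  case: (eqVneq t (pi s)) => [ets|nts]; first by move: ltt; rewrite ets piK; lia.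
  have nts' : nat_of_ord t != pi s by rewrite val_eqE.
  have [lt_tps|le_pst] := ltnP t (pi s).
    have := @pi_noncrossing s t lts (ltac:(lia)) ltt => nested.
    by repeat (case: ifP => ?); try (exfalso; lia); lra.
  by repeat (case: ifP => ?); try (exfalso; lia); lra.
- apply: mxrankS; apply/sumsmx_subP => s os.
  by apply: (sumsmx_sup [set s; pi s]) => //; rewrite orbits2_openers; apply: imset_f.
Qed.

End Involution.

Definition sign_cmp (o k : nat) : rat :=
  if (k < o)%N then 1 else if (o < k)%N then -1 else 0.

(* Within a block of length n, the rows of Omega reduced by its first and last
   rows form the matrix (sign_cmp o k)_(k, o).  Row o of pivot_table n inverts
   it on the columns o' other than the centre of an odd block, and
   centre_table n expresses the centre row through the other ones. *)
Definition pivot_table : seq (seq (seq rat)) :=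
 [:: [::]; [:: [::0]]; [:: [::0;-1]; [::1;0]];
  [:: [::1;-1;0]; [::0;0;0]; [::0;1;-1]];
  [:: [::0;-1;1;-1]; [::1;0;-1;1]; [::-1;1;0;-1]; [::1;-1;1;0]];
  [:: [::1;-2;1;0;0]; [::0;1;-1;0;0]; [::0;0;0;0;0]; [::0;0;1;-1;0];
      [::0;0;-1;2;-1]] ].
Definition pivot_coef (n o k : nat) : rat :=
  nth 0 (nth [::] (nth [::] pivot_table n) o) k.

Definition centre_table : seq (seq rat) :=
  [:: [::]; [::0]; [::]; [::1;0;1]; [::]; [::-1;1;0;1;-1]].
Definition centre_coef (n k : nat) : rat := nth 0 (nth [::] centre_table n) k.

Lemma pivot_coefP n o o' : (0 < n <= 5)%N -> (o < n)%N -> (o' < n)%N ->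
  o.*2.+1 != n -> o'.*2.+1 != n ->
  \sum_(k < n) pivot_coef n o k * sign_cmp o' k = (o == o')%:R.
Proof.
move=> hn ho ho' h1 h2.
do 6?[case: n hn ho ho' h1 h2 => [|n] hn ho ho' h1 h2; last first]; try lia;
do 6?[case: o ho h1 => [|o] ho h1; last first]; try lia;
do 6?[case: o' ho' h2 => [|o'] ho' h2; last first]; try lia;
rewrite /pivot_coef /= !big_ord_recr big_ord0 /= /sign_cmp /=; lra.
Qed.

Lemma centre_coefP n o' : (n <= 5)%N -> odd n -> (o' < n)%N ->
  \sum_(k < n) centre_coef n k * sign_cmp o' k = sign_cmp o' n./2.
Proof.
move=> hn hodd ho'.
do 6?[case: n hn hodd ho' => [|n] hn hodd ho'; last first]; try lia;
do 6?[case: o' ho' => [|o'] ho'; last first]; try lia;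
rewrite /centre_coef /= !big_ord_recr big_ord0 /= /sign_cmp /=; lra.
Qed.

Lemma centre_coef_centre n : (n <= 5)%N -> odd n -> centre_coef n n./2 = 0.
Proof. by case: n => [|[|[|[|[|[|n]]]]]]. Qed.

Fixpoint block_of (j : nat) (ns : seq nat) (i : nat) : nat * nat :=
  if ns is n :: ns' then if (i < j + n)%N then (j, n) else block_of (j + n) ns' i
  else (j, 0%N).

Section BlockPermutation.
Variable m : nat.
Local Notation d := m.+2.
Variable pi : {perm 'I_d}.
Hypothesis pi_first : nat_of_ord (pi ord0) = m.+1.
Hypothesis pi_last : nat_of_ord (pi ord_max) = 0%N.

Definition splits_at (c : nat) :=
  forall b : 'I_d, (0 < b < m.+1)%N -> (b < c)%N = (pi b < c)%N.

Inductive reversal_block (j n : nat) : Prop :=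
  ReversalBlock of (0 < j)%N & (0 < n <= 5)%N & (j + n <= m.+1)%N
  & (forall k : 'I_d, (j <= k < j + n)%N -> nat_of_ord (pi k) = (j + j + n).-1 - k)%N
  & splits_at j & splits_at (j + n).

Lemma ord0_of_val (b : 'I_d) : nat_of_ord b = 0%N -> b = ord0.
Proof. by move=> h; apply: val_inj. Qed.

Lemma ord_max_of_val (b : 'I_d) : nat_of_ord b = m.+1 -> b = ord_max.
Proof. by move=> h; apply: val_inj. Qed.

Lemma pi_eq_last b : nat_of_ord (pi b) = m.+1 -> nat_of_ord b = 0%N.
Proof.
move=> h; have : pi b = pi ord0 by apply: val_inj => /=; rewrite h pi_first.
by move/perm_inj ->.
Qed.

Lemma pi_eq_first b : nat_of_ord (pi b) = 0%N -> nat_of_ord b = m.+1.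
Proof.
move=> h; have : pi b = pi ord_max by apply: val_inj => /=; rewrite h pi_last.
by move/perm_inj ->.
Qed.

Lemma splits_at_1 : splits_at 1.
Proof.
move=> b interior; have := ltn_ord (pi b).
by case: (eqVneq (nat_of_ord (pi b)) 0%N) => [/pi_eq_first|]; lia.
Qed.

Lemma splits_at_block_end j n : splits_at j -> (0 < j)%N -> (j + n <= m.+1)%N ->
  (forall k : 'I_d, (j <= k < j + n)%N -> nat_of_ord (pi k) = (j + j + n).-1 - k)%N ->
  splits_at (j + n).
Proof.
move=> split_j j_gt0 jn rev b interior; have split_b := split_j b interior.
have [inb|outb] := boolP (j <= b < j + n)%N; first by have := rev b inb; lia.
have [ltbj|lejb] := ltnP b j; first by lia.
have [ltp|] := ltnP (pi b) (j + n); last by lia.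
pose k : 'I_d := inord ((j + j + n).-1 - pi b).
have kE : nat_of_ord k = ((j + j + n).-1 - pi b)%N by rewrite inordK; lia.
have inj : (j <= k < j + n)%N by lia.
have : pi k = pi b by apply: val_inj => /=; rewrite rev //; lia.
by move/perm_inj => ekb; move: kE; rewrite ekb; lia.
Qed.

Lemma blocks_ok_block_of j ns (i : 'I_d) : blocks_ok pi j ns -> splits_at j ->
  (0 < j)%N -> (j + sumn ns <= m.+1)%N -> (j <= i < j + sumn ns)%N ->
  reversal_block (block_of j ns i).1 (block_of j ns i).2 /\
  ((block_of j ns i).1 <= i < (block_of j ns i).1 + (block_of j ns i).2)%N.
Proof.
elim: ns j => [|n ns IH] j /=; first by lia.
move=> [n_range [rev ok]] split_j j_gt0 le_sum ini.
have split_jn : splits_at (j + n) by apply: splits_at_block_end => //; lia.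
case: ifP => inblk /=; last by apply: IH => //; lia.
by split; [apply: ReversalBlock => //; lia | lia].
Qed.

Variables blk_start blk_len : nat -> nat.
Hypothesis interior_in_block : forall i : 'I_d, (0 < i < m.+1)%N ->
  reversal_block (blk_start i) (blk_len i) /\
  (blk_start i <= i < blk_start i + blk_len i)%N.

Lemma block_involutive : involutive pi.
Proof.
move=> i; apply: val_inj => /=; have lt_i := ltn_ord i.
have [/ord0_of_val ->|i_gt0] := eqVneq (nat_of_ord i) 0%N.
  by rewrite (ord_max_of_val pi_first) pi_last.
have [/ord_max_of_val ->|i_lt] := eqVneq (nat_of_ord i) m.+1.
  by rewrite (ord0_of_val pi_last) pi_first.
have interior : (0 < i < m.+1)%N by lia.
have [[_ _ _ rev _ _] ini] := interior_in_block interior.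
have pi_i := rev i ini.
have := rev (pi i) (ltac:(lia)); lia.
Qed.

Ltac case_ifs :=
  have ? : nat_of_ord (@ord0 m.+1) = 0%N := erefl;
  have ? : nat_of_ord (@ord_max m.+1) = m.+1 := erefl;
  repeat (case: ifP => ?); try done; exfalso; lia.

Lemma Omega_first_row b :
  Omega pi ord0 b = if nat_of_ord b == 0%N then 0 else 1.
Proof.
rewrite OmegaE pi_first; have := ltn_ord b; have := ltn_ord (pi b).
by case: (eqVneq (nat_of_ord (pi b)) m.+1) => [/pi_eq_last|] ? ? ?; case_ifs.
Qed.

Lemma Omega_last_row b :
  Omega pi ord_max b = if nat_of_ord b == m.+1 then 0 else -1.
Proof.
rewrite OmegaE pi_last; have := ltn_ord b; have := ltn_ord (pi b).
by case: (eqVneq (nat_of_ord (pi b)) 0%N) => [/pi_eq_first|] ? ? ?; case_ifs.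
Qed.

Lemma Omega_block_row j n (a b : 'I_d) : reversal_block j n -> (j <= a < j + n)%N ->
  Omega pi a b = if nat_of_ord b == 0%N then -1 else if nat_of_ord b == m.+1 then 1
    else if (j <= b < j + n)%N then sign_cmp b a else 0.
Proof.
move=> [j_gt0 _ jn rev split_j split_jn] ina; rewrite OmegaE /sign_cmp.
have pi_a := rev a ina; have lt_b := ltn_ord b; have lt_pb := ltn_ord (pi b).
have [/ord0_of_val ->|b_gt0] := eqVneq (nat_of_ord b) 0%N; first by rewrite pi_first; case_ifs.
have [/ord_max_of_val ->|b_lt] := eqVneq (nat_of_ord b) m.+1; first by rewrite pi_last; case_ifs.
have interior : (0 < b < m.+1)%N by lia.
have [inb|outb] := boolP (j <= b < j + n)%N; first by have ? := rev b inb; case_ifs.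
by have ? := split_j b interior; have ? := split_jn b interior; case_ifs.
Qed.

Definition reduced_row (a : 'I_d) : 'rV[rat]_d :=
  row a (Omega pi) - row ord0 (Omega pi) - row ord_max (Omega pi).

Lemma reduced_rowE j n (a b : 'I_d) : reversal_block j n -> (j <= a < j + n)%N ->
  reduced_row a 0 b = if (j <= b < j + n)%N then sign_cmp (b - j) (a - j) else 0.
Proof.
move=> blk ina; have [j_gt0 _ jn _ _ _] := blk.
have -> : reduced_row a 0 b = Omega pi a b - Omega pi ord0 b - Omega pi ord_max b.
  by rewrite !mxE.
rewrite (Omega_block_row b blk ina) Omega_first_row Omega_last_row /sign_cmp.
have ? := ltn_ord b; repeat (case: ifP => ?); try (exfalso; lia); lra.
Qed.

Definition block_comb j n (c : nat -> rat) : 'rV[rat]_d :=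
  \sum_(k < n) c k *: reduced_row (inord (j + k)).

Lemma block_combE j n c b : reversal_block j n ->
  block_comb j n c 0 b =
  if (j <= b < j + n)%N then \sum_(k < n) c k * sign_cmp (b - j) k else 0.
Proof.
move=> blk; have [_ _ jn _ _ _] := blk.
have inblk (k : 'I_n) : (j <= @inord m.+1 (j + k) < j + n)%N.
  by rewrite inordK; have := ltn_ord k; lia.
rewrite /block_comb summxE; case: ifP => inb.
  apply: eq_bigr => k _; rewrite mxE (reduced_rowE b blk (inblk k)) inb.
  by rewrite inordK ?addKn //; have := ltn_ord k; lia.
by apply: big1 => k _; rewrite mxE (reduced_rowE b blk (inblk k)) inb mulr0.
Qed.

Lemma block_comb_sub j n c : (block_comb j n c <= Omega pi)%MS.
Proof.
apply: summx_sub => k _; apply: scalemx_sub.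
by rewrite /reduced_row !rowE -!mulmxBl submxMl.
Qed.

Lemma block_noncrossing (s t : 'I_d) :
  (s < pi s)%N -> (s < t < pi s)%N -> (t < pi t)%N -> (pi t < pi s)%N.
Proof.
move=> lts st ltt; have ? := ltn_ord (pi t).
have [s0|s_gt0] := eqVneq (nat_of_ord s) 0%N.
  rewrite (ord0_of_val s0) pi_first.
  by case: (eqVneq (nat_of_ord (pi t)) m.+1) => [/pi_eq_last|] ?; lia.
have ? := ltn_ord (pi s).
have [[_ _ _ rev _ _] ins] := @interior_in_block s (ltac:(lia)).
have ? := rev s ins; have ? := rev t (ltac:(lia)); lia.
Qed.

Local Notation moved_rows := (\sum_(s in moved pi) <<row s (Omega pi)>>)%MS.

Lemma ord0_moved : ord0 \in moved pi.
Proof. by rewrite inE -(inj_eq val_inj) /= pi_first. Qed.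

Lemma ord_max_moved : ord_max \in moved pi.
Proof. by rewrite inE -(inj_eq val_inj) /= pi_last. Qed.

Lemma row_sub_moved_rows s : s \in moved pi -> (row s (Omega pi) <= moved_rows)%MS.
Proof. by move=> ms; apply: (sumsmx_sup s) => //; rewrite genmxE. Qed.

Lemma ends_sub_moved_rows :
  ((row ord0 (Omega pi) + row ord_max (Omega pi))%R <= moved_rows)%MS.
Proof. by apply: addmx_sub; apply: row_sub_moved_rows; rewrite ?ord0_moved ?ord_max_moved. Qed.

Lemma reduced_row_sub_moved_rows a : a \in moved pi -> (reduced_row a <= moved_rows)%MS.
Proof.
move=> ma; rewrite /reduced_row -addrA -opprD; apply: addmx_sub.
  exact: row_sub_moved_rows.
by rewrite eqmx_opp ends_sub_moved_rows.
Qed.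

Lemma fixed_centre i : i \notin moved pi ->
  (0 < i < m.+1)%N /\ blk_len i = (i - blk_start i).*2.+1.
Proof.
rewrite inE negbK => /eqP fixed.
have i_ne0 : i != ord0 by apply: contraTneq ord0_moved => <-; rewrite inE fixed eqxx.
have i_ne_max : i != ord_max.
  by apply: contraTneq ord_max_moved => <-; rewrite inE fixed eqxx.
have interior : (0 < i < m.+1)%N.
  by move: i_ne0 i_ne_max; rewrite -!(inj_eq val_inj) /=; have := ltn_ord i; lia.
have [[_ _ _ rev _ _] ini] := interior_in_block interior.
by split=> //; have := rev i ini; rewrite fixed -addnn; lia.
Qed.

Lemma rank_Omega_le : (\rank (Omega pi) <= #|moved pi|)%N.
Proof.
apply: leq_trans (mxrank_sum_rows_le (moved pi) (fun s => row s (Omega pi))).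
apply: mxrankS; apply/row_subP => i.
have [/row_sub_moved_rows //|fixed] := boolP (i \in moved pi).
have -> : row i (Omega pi) =
    reduced_row i + (row ord0 (Omega pi) + row ord_max (Omega pi)).
  by rewrite /reduced_row -[_ - _ - _]addrA -opprD subrK.
apply: addmx_sub (ends_sub_moved_rows).
have [interior n_odd] := fixed_centre fixed.
have [blk ini] := interior_in_block interior.
have [_ n_le5 jn rev _ _] := blk.
have n_le5' : (blk_len i <= 5)%N by lia.
have oddn : odd (blk_len i) by rewrite n_odd /= odd_double.
have centre : (blk_len i)./2 = (i - blk_start i)%N by rewrite n_odd /= uphalf_double.
have -> : reduced_row i = block_comb (blk_start i) (blk_len i) (centre_coef (blk_len i)).
  apply/rowP => b; rewrite (reduced_rowE b blk ini) (block_combE _ b blk).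
  by case: ifP => // inb; rewrite centre_coefP ?centre //; lia.
apply: summx_sub => k _.
have [->|k_ne] := eqVneq (nat_of_ord k) (blk_len i)./2.
  by rewrite centre_coef_centre // scale0r sub0mx.
apply: scalemx_sub; apply: reduced_row_sub_moved_rows.
have ? := ltn_ord k; rewrite inE -(inj_eq val_inj) /= rev inordK //; lia.
Qed.

Definition pivot_comb (s : 'I_d) : 'rV[rat]_d :=
  block_comb (blk_start s) (blk_len s) (pivot_coef (blk_len s) (s - blk_start s)).

Lemma moved_off_centre j n (t : 'I_d) : reversal_block j n -> (j <= t < j + n)%N ->
  t \in moved pi -> (t - j).*2.+1 != n.
Proof.
by move=> [_ _ _ rev _ _] int; rewrite inE -(inj_eq val_inj) /= rev // -addnn; lia.
Qed.

Lemma pivot_comb_moved (s t : 'I_d) : (0 < s < m.+1)%N ->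
  s \in moved pi -> t \in moved pi -> pivot_comb s 0 t = (s == t)%:R.
Proof.
move=> interior ms mt; have [blk ins] := interior_in_block interior.
have [_ n_range _ _ _ _] := blk.
rewrite /pivot_comb (block_combE _ t blk); case: ifP => [int|/negbT outt].
  rewrite pivot_coefP ?(moved_off_centre blk) //; try lia.
  by rewrite -(inj_eq val_inj) /=; congr (_%:R); apply/eqP/eqP; lia.
by apply/esym/eqP; rewrite pnatr_eq0 eqb0; apply: contraNneq outt => <-.
Qed.

Lemma rank_Omega_ge : (#|moved pi| <= \rank (Omega pi))%N.
Proof.
pose r a := row a (Omega pi).
pose w s := if s == ord0 then r ord0 + r ord_max
  else if s == ord_max then r ord0 else pivot_comb s.
pose h (s : 'I_d) := if s == ord_max then 1%N else if s == ord0 then 2%N else 0%N.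
have rE a b : r a 0 b = Omega pi a b by rewrite mxE.
have interior (s : 'I_d) : s != ord0 -> s != ord_max -> (0 < s < m.+1)%N.
  by rewrite -!(inj_eq val_inj) /=; have := ltn_ord s; lia.
apply: leq_trans (@mxrank_sum_rows_triangular _ _ (moved pi) w h _ _) _.
- move=> s ms; rewrite /w.
  have [->|s_ne0] := eqVneq s ord0; first by rewrite mxE !rE !Omega_first_row Omega_last_row.
  have [->|s_ne_max] := eqVneq s ord_max; first by rewrite rE Omega_first_row.
  by rewrite pivot_comb_moved ?interior ?eqxx ?oner_eq0.
- move=> s t ms mt s_ne_t; rewrite /w /h.
  have [s0|s_ne0] := eqVneq s ord0.
    rewrite s0 in s_ne_t *.
    have ord0_ne_max : ord0 != ord_max :> 'I_d by rewrite -(inj_eq val_inj).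
    rewrite (negbTE ord0_ne_max); have [//|_] := eqVneq t ord_max.
    by have [t0|] := eqVneq t ord0; first by rewrite t0 eqxx in s_ne_t.
  have [s1|s_ne_max] := eqVneq s ord_max.
    rewrite s1 in s_ne_t *.
    have [t1|t_ne_max] := eqVneq t ord_max; first by rewrite t1 eqxx in s_ne_t.
    by have [->|] := eqVneq t ord0; rewrite ?rE ?Omega_first_row.
  by move=> _; rewrite pivot_comb_moved ?interior // (negbTE s_ne_t).
- apply: mxrankS; apply/sumsmx_subP => s _; rewrite genmxE /w.
  case: ifP => _; first by apply: addmx_sub; apply: row_sub.
  by case: ifP => _; [apply: row_sub | apply: block_comb_sub].
Qed.

Lemma rank_Omega : \rank (Omega pi) = #|moved pi|.
Proof. by apply/eqP; rewrite eqn_leq rank_Omega_le rank_Omega_ge. Qed.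

Lemma block_transposition_Lagrangian : transposition_Lagrangian pi.
Proof.
have piK := block_involutive.
split; first by apply/permP => i; rewrite permM perm1 piK.
rewrite span_dim_noncrossing ?card_orbits2 //; last exact: block_noncrossing.
by rewrite /genus rank_Omega card_moved // doubleK.
Qed.

End BlockPermutation.

Lemma transposition_Lagrangian_small d (pi : {perm 'I_d}) :
  (d <= 1)%N -> transposition_Lagrangian pi.
Proof.
move=> d_le1; have all_eq (x y : 'I_d) : x = y.
  by apply: val_inj => /=; have := ltn_ord x; have := ltn_ord y; lia.
have no_orbits2 : orbits2 pi = set0.
  apply/setP => B; rewrite !inE; apply/negP => /andP[_ /eqP cardB].
  by have := max_card B; rewrite cardB card_ord; lia.
have span0 : span_dim pi = 0%N.
  by apply/eqP; rewrite -leqn0 (leq_trans (mxrank_sum_rows_le _ _)) // no_orbits2 cards0.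
split; first by apply/permP => i; apply: all_eq.
rewrite span0 no_orbits2 cards0 /genus; split => //.
by have := rank_leq_row (Omega pi); case: (\rank _) => [|[|r]] //; lia.
Qed.

Theorem mainTheorem11 (d : nat) (pi : {perm 'I_d}) :
  block_constructed pi -> transposition_Lagrangian pi.
Proof.
case: d pi => [|[|m]] pi; [by move=> _; apply: transposition_Lagrangian_small..|].
move=> [first_to_last [last_to_first [ns [sum_ns ok]]]].
have pi_first : nat_of_ord (pi ord0) = m.+1 := first_to_last ord0 erefl.
have pi_last : nat_of_ord (pi ord_max) = 0%N := last_to_first ord_max erefl.
apply: (@block_transposition_Lagrangian _ _ pi_first pi_last
  (fun i => (block_of 1 ns i).1) (fun i => (block_of 1 ns i).2)) => i interior.
apply: blocks_ok_block_of ok _ _ _ _ => //; first exact: splits_at_1.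
all: by rewrite sum_ns; lia.
Qed.
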